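(* Let $X$ and $Y$ be nontrivial metrizable spaces. The following are equivalent: (1) $X$ is countable; (2) $Q_p(X,\mathbb{D})$ is Fr\'{e}chet-Urysohn; (3) $Q_p(X,Y)$ is Fr\'{e}chet-Urysohn; (4) $Q_p(X,Y)$ is first countable; (5) $Q_p(X,Y)$ is metrizable.
   Context: A function $f:X\to Y$ is quasicontinuous if for every $x\in X$, every open $V\ni f(x)$ and every open $U\ni x$ there is a nonempty open $W\subseteq U$ with $f(W)\subseteq V$. $Q_p(X,Y)$ is the set of all quasicontinuous functions $X\to Y$ with the topology of pointwise convergence; $\mathbb{D}=\{0,1\}$ is the discrete two-point space. A space $Z$ is Fr\'{e}chet-Urysohn if for every $A\subseteq Z$ and $z\in\overline{A}$ there is a sequence in $A$ converging to $z$. Nontrivial means having more than one point. *)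

From HB Require Import structures.
From mathcomp Require Import all_boot all_order all_algebra.
From mathcomp Require Import all_classical all_reals all_analysis.
From Stdlib Require Import Reals.

Set Implicit Arguments.
Unset Strict Implicit.
Unset Printing Implicit Defensive.

Local Open Scope classical_set_scope.

Definition metrizable_top {T : Type} (op : set (set T)) : Prop :=
  exists d : T -> T -> R,
    (forall x y, (0 <= d x y)%R) /\
    (forall x y, d x y = 0%R <-> x = y) /\
    (forall x y, d x y = d y x) /\
    (forall x y z, (d x z <= d x y + d y z)%R) /\
    (forall U : set T, op U <->
       (forall x, U x -> exists e : R, (0 < e)%R /\
          (forall y, (d x y < e)%R -> U y))).

Definition seq_converges {T : Type} (op : set (set T)) (u : nat -> T) (z : T)
  : Prop :=
  forall U, op U -> U z -> exists N, forall n, (N <= n)%N -> U (u n).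

Definition in_closure {T : Type} (op : set (set T)) (A : set T) (z : T) : Prop :=
  forall U, op U -> U z -> exists a, A a /\ U a.

Definition frechet_urysohn {T : Type} (op : set (set T)) : Prop :=
  forall (A : set T) (z : T), in_closure op A z ->
    exists u : nat -> T, (forall n, A (u n)) /\ seq_converges op u z.

Definition first_countable {T : Type} (op : set (set T)) : Prop :=
  forall z : T, exists B : nat -> set T,
    (forall n, op (B n) /\ B n z) /\
    (forall U, op U -> U z -> exists n, B n `<=` U).

Definition quasicontinuous {X Y : Type} (oX : set (set X)) (oY : set (set Y))
  (f : X -> Y) : Prop :=
  forall (x : X) (V : set Y) (U : set X),
    oY V -> V (f x) -> oX U -> U x ->
    exists W : set X, oX W /\ W !=set0 /\ W `<=` U /\ f @` W `<=` V.

Definition Qp {X Y : Type} (oX : set (set X)) (oY : set (set Y)) : Type :=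
  {f : X -> Y | quasicontinuous oX oY f}.

(* Topology of pointwise convergence on Q_p(X,Y): subspace of the product
   topology Y^X; U is open iff each of its points has a basic neighbourhood
   (finitely many points x, open sets V x around f x) contained in U. *)
Definition Qp_open {X Y : Type} (oX : set (set X)) (oY : set (set Y))
  : set (set (Qp oX oY)) :=
  fun U => forall f, U f ->
    exists (F : seq X) (V : X -> set Y),
      (forall x, List.In x F -> oY (V x) /\ V x (proj1_sig f x)) /\
      (forall g : Qp oX oY,
         (forall x, List.In x F -> V x (proj1_sig g x)) -> U g).

(* The discrete topology (every subset open); used for D = {0,1} = bool. *)
Definition discrete_top (T : Type) : set (set T) := setT.

Definition nontrivial (T : Type) : Prop := exists x y : T, x <> y.

Arguments Qp_open {X Y} oX oY.
Arguments quasicontinuous {X Y} oX oY f.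
Arguments metrizable_top {T} op.
Arguments frechet_urysohn {T} op.
Arguments first_countable {T} op.
Arguments discrete_top T : clear implicits.

(* If X is countable, Q_p(X,Y) is a subspace of the countable power Y^X and is
   metrized by sup_n min(1/(n+1), d(f(e n), g(e n))) along an enumeration e of
   X; metrizable spaces are first countable, hence Frechet-Urysohn.

   If X is uncountable we build open sets U(G), indexed by the finite G in X,
   with G inside the closure of U(G), such that for every sequence (G_n) some
   point lies outside the closure of U(G_n) for infinitely many n.  The
   functions equal to y1 on the closure of U(G) and to y0 elsewhere are
   quasicontinuous and accumulate at the constant y1, but no sequence of them
   converges to it.  Such a family exists when some uncountable P, after the
   removal of any finite G, is nowhere dense at the points of G: this covers
   uncountable nowhere dense sets and uncountable uniformly separated sets.
   Otherwise X is separable and all its nowhere dense sets are countable; then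
   U(G) is the union of the balls of a small radius around G.  If every point
   were eventually in the closures of the U(G_n), some uncountable basic ball
   would eventually lie in them; the radius is so small that this bounds the
   size of G_n, and then the closures eventually contain a fixed set of
   |G_n|+1 points too far apart to share a ball: pigeonhole. *)

From HB Require Import structures.
From mathcomp Require Import all_boot all_order all_algebra.
From mathcomp Require Import all_classical all_reals all_analysis.
From Stdlib Require Import Reals Lra.
From mathcomp Require Import zify.

Set Implicit Arguments.

Local Open Scope classical_set_scope.
Local Open Scope R_scope.

Lemma inv_succ_pos (n : nat) : 0 < / (INR n + 1).
Proof. by apply: Rinv_0_lt_compat; have := pos_INR n; lra. Qed.

Lemma inv_succ_le {m n : nat} : (m <= n)%nat -> / (INR n + 1) <= / (INR m + 1).
Proof.
move=> /leP /le_INR mn; apply: Rinv_le_contravar; last lra.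
by have := pos_INR m; lra.
Qed.

Lemma inv_succ_lt (e : R) : 0 < e -> exists n : nat, / (INR n + 1) < e.
Proof.
move=> /archimed_cor1 [n [ne n0]]; exists n; apply: Rle_lt_trans ne.
by apply: Rinv_le_contravar; [apply: lt_0_INR|lra].
Qed.

Lemma seq_pos_lower_bound (A : Type) (l : seq A) (f : A -> R) :
  (forall a, List.In a l -> 0 < f a) ->
  exists2 r, 0 < r & forall a, List.In a l -> r <= f a.
Proof.
elim: l => [|a l IH] fpos; first by exists 1 => //; lra.
have [r r0 lb] := IH (fun b lb => fpos b (or_intror lb)).
exists (Rmin (f a) r); first by apply: Rmin_pos => //; apply: fpos; left.
move=> b [<-|lb']; first exact: Rmin_l.
exact: Rle_trans (Rmin_r _ _) (lb _ lb').
Qed.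

Lemma seq_eventually (A : Type) (l : seq A) (Q : A -> nat -> Prop) :
  (forall a, List.In a l -> exists N, forall n, (N <= n)%nat -> Q a n) ->
  exists N, forall n, (N <= n)%nat -> forall a, List.In a l -> Q a n.
Proof.
elim: l => [|a l IH] ev; first by exists 0%nat.
have [N1 H1] := ev a (or_introl erefl).
have [N2 H2] := IH (fun b lb => ev b (or_intror lb)).
exists (N1 + N2)%nat => n Nn b [<-|lb]; [apply: H1|apply: H2] => //; lia.
Qed.

Lemma pigeonhole_In {A B : Type} {s : seq A} {t : seq B} {f : A -> B} :
  List.NoDup s -> (size t < size s)%nat ->
  (forall a, List.In a s -> List.In (f a) t) ->
  exists a b, [/\ List.In a s, List.In b s, a <> b & f a = f b].
Proof.
move=> us ts fst; apply: contrapT => noncoll.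
have inj : List.ForallPairs (fun a b => f a = f b -> a = b) s.
  move=> a b sa sb fab; apply: contrapT => ab; apply: noncoll; by exists a, b.
have : (length (List.map f s) <= length t)%coq_nat.
  apply: List.NoDup_incl_length (List.NoDup_map_NoDup_ForallPairs f inj us) _.
  by move=> _ /List.in_map_iff [a [<- sa]]; exact: fst.
by rewrite List.length_map -[length s]/(size s) -[length t]/(size t); lia.
Qed.

Lemma finite_set_In (T : Type) (l : seq T) : finite_set [set x | List.In x l].
Proof.
elim: l => [|a l IH]; first exact: finite_set0.
have -> : [set x | List.In x (a :: l)] = [set a] `|` [set x | List.In x l].
  by apply/seteqP; split=> x /= [<-|xl]; by [left|right].
by rewrite finite_setU; split; [exact: finite_set1|].
Qed.

Lemma uncountable_avoid_lists (T : Type) {P : set T} :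
  ~ countable P -> forall Gs : nat -> seq T, exists2 q, P q & forall n, ~ List.In q (Gs n).
Proof.
move=> Punc Gs; apply: contrapT => hit; apply: Punc.
apply: (@sub_countable _ _ _ (\bigcup_(n in setT) [set x | List.In x (Gs n)])).
  apply: subset_card_le => q Pq; apply: contrapT => nq; apply: hit.
  by exists q => // n qn; apply: nq; exists n.
by apply: bigcup_countable => // n _; exact/finite_set_countable/finite_set_In.
Qed.

Lemma uncountable_NoDup {T : Type} n :
  ~ countable [set: T] -> exists l : seq T, List.NoDup l /\ size l = n.
Proof.
move=> Tunc; elim: n => [|n [l [ul sl]]]; first by exists [::]; split=> //; constructor.
have [x _ xl] := uncountable_avoid_lists Tunc (fun=> l).
by exists (x :: l); split; [constructor; [exact: xl 0%nat|]|rewrite /= sl].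
Qed.

Lemma countable_setU T (A B : set T) :
  countable A -> countable B -> countable (A `|` B).
Proof. by move=> cA cB; rewrite -bigcup2E; apply: bigcup_countable => // -[|[|i]] _. Qed.

Lemma countable_enum (T : Type) {A : set T} (x0 : T) :
  countable A -> exists e : nat -> T, A `<=` range e.
Proof.
move=> /ocard_geP [f]; exists (fun n => odflt x0 (f n)) => x Ax.
have [n _ fn] := @surj _ _ _ _ f (Some x) (ex_intro2 _ _ x Ax erefl).
by exists n => //; rewrite fn.
Qed.

Definition metric_for {T : Type} (op : set (set T)) (d : T -> T -> R) : Prop :=
  (forall x y, 0 <= d x y) /\
  (forall x y, d x y = 0 <-> x = y) /\
  (forall x y, d x y = d y x) /\
  (forall x y z, d x z <= d x y + d y z) /\
  (forall U : set T, op U <->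
     (forall x, U x -> exists e : R, 0 < e /\ (forall y, d x y < e -> U y))).

Definition dball {T : Type} (d : T -> T -> R) (x : T) (r : R) : set T :=
  [set y | d x y < r].

Definition dclosure {T : Type} (d : T -> T -> R) (A : set T) (x : T) : Prop :=
  forall e, 0 < e -> exists2 a, A a & d x a < e.

Definition nowhere_dense_at {T : Type} (d : T -> T -> R) (A : set T) (x : T) : Prop :=
  forall e, 0 < e -> exists y s, [/\ 0 < s, d x y < e & forall a, A a -> s <= d y a].

Definition dinterior {T : Type} (d : T -> T -> R) (E : set T) : set T :=
  [set x | exists2 e, 0 < e & dball d x e `<=` E].

Definition dballs {T : Type} (d : T -> T -> R) (G : seq T) (r : R) : set T :=
  [set z | exists2 g, List.In g G & d g z < r].

Section Metric.
Variables (T : Type) (op : set (set T)) (d : T -> T -> R).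
Hypothesis dm : metric_for op d.

Lemma metric_for_ge0 x y : 0 <= d x y. Proof. by case: dm. Qed.

Lemma metric_for_eq0 x y : d x y = 0 -> x = y.
Proof. by case: dm => _ [/(_ x y) []]. Qed.

Lemma metric_for_xx x : d x x = 0.
Proof. by case: dm => _ [/(_ x x) [_ ->]]. Qed.

Lemma metric_for_sym x y : d x y = d y x.
Proof. by case: dm => _ [_ []]. Qed.

Lemma metric_for_triangle x y z : d x z <= d x y + d y z.
Proof. by case: dm => _ [_ [_ []]]. Qed.

Lemma metric_for_gt0 x y : x <> y -> 0 < d x y.
Proof.
move=> xy; case: (Rle_lt_or_eq_dec _ _ (metric_for_ge0 x y)) => // /esym.
by move/metric_for_eq0.
Qed.

Lemma metric_openP U :
  op U <-> forall x, U x -> exists2 r, 0 < r & dball d x r `<=` U.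
Proof.
case: dm => _ [_ [_ [_ /(_ U) ->]]].
by split=> opn x /opn [r]; [case=> r0 rU; exists r | exists r].
Qed.

Lemma open_dball x r : op (dball d x r).
Proof.
apply/metric_openP => y xy; exists (r - d x y); first by rewrite /dball /= in xy; lra.
move=> z; rewrite /dball /= => yz; have := metric_for_triangle x y z; lra.
Qed.

Lemma dball_center x r : 0 < r -> dball d x r x.
Proof. by rewrite /dball /= metric_for_xx. Qed.

Lemma open_union_dballs U :
  (forall z, U z -> exists c r, d c z < r /\ dball d c r `<=` U) -> op U.
Proof.
move=> balls; apply/metric_openP => z /balls [c [r [cz cU]]].
exists (r - d c z); first lra.
move=> w; rewrite /dball /= => zw; apply: cU.
by rewrite /dball /=; have := metric_for_triangle c z w; lra.
Qed.

Lemma notin_dclosure A x :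
  ~ dclosure d A x -> exists2 e, 0 < e & forall a, A a -> e <= d x a.
Proof.
move=> ncl; apply: contrapT => far; apply: ncl => e e0; apply: contrapT => nA.
apply: far; exists e => // a Aa; apply: Rnot_lt_le => ae; apply: nA; by exists a.
Qed.

Lemma dclosure_idem A x : dclosure d (dclosure d A) x -> dclosure d A x.
Proof.
move=> cl e e0; have e2 : 0 < e / 2 by lra.
have [z clz xz] := cl _ e2; have [a Aa za] := clz _ e2.
exists a => //; have := metric_for_triangle x z a; lra.
Qed.

Lemma metric_separating x0 x1 : x0 <> x1 -> exists V, [/\ op V, V x1 & ~ V x0].
Proof.
move=> x01; exists (dball d x1 (d x1 x0)); split; first exact: open_dball.
  by apply: dball_center; apply: metric_for_gt0 => /esym.
by rewrite /dball /=; lra.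
Qed.

Lemma metric_first_countable : first_countable op.
Proof.
move=> z; exists (fun n => dball d z (/ (INR n + 1))); split.
  by move=> n; split; [exact: open_dball|apply: dball_center; exact: inv_succ_pos].
move=> U /metric_openP zU /zU [r r0 rU]; have [n nr] := inv_succ_lt r0.
by exists n => y; rewrite /dball /= => zy; apply: rU; rewrite /dball /=; lra.
Qed.

Lemma dclosureS (A B : set T) x : A `<=` B -> dclosure d A x -> dclosure d B x.
Proof. by move=> AB clA e /clA [a /AB]; exists a. Qed.

Lemma closed_boundary_nowhere_dense (E : set T) :
  (forall x, dclosure d E x -> E x) ->
  forall x, nowhere_dense_at d (E `\` dinterior d E) x.
Proof.
move=> Eclosed x e e0.
case: (pselect (dball d x (e / 2) `<=` E)) => [sub|nsub].
- exists x, (e / 4); split; [lra|rewrite metric_for_xx; lra|].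
  move=> a [_ nint]; apply: Rnot_lt_le => xa; apply: nint.
  exists (e / 4); first lra.
  move=> w; rewrite /dball /= => aw; apply: sub; rewrite /dball /=.
  have := metric_for_triangle x a w; lra.
- have [y xy nEy] : exists2 y, dball d x (e / 2) y & ~ E y.
    by apply: contrapT => all; apply: nsub => y xy; apply: contrapT => nEy; apply: all; exists y.
  have [s s0 far] := notin_dclosure (fun cl => nEy (Eclosed y cl)).
  exists y, s; split=> //; first by rewrite /dball /= in xy; lra.
  by move=> a [Ea _]; exact: far.
Qed.

Lemma open_dballs G r : op (dballs d G r).
Proof.
apply: open_union_dballs => z [g gG gz].
by exists g, r; split=> // w gw; exists g.
Qed.

Lemma dclosure_dballs G r x :
  0 < r -> dclosure d (dballs d G r) x -> exists2 g, List.In g G & d x g < 2 * r.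
Proof.
move=> r0 /(_ r r0) [z [g gG gz] xz]; exists g => //.
have := metric_for_triangle x z g; rewrite (metric_for_sym z g); lra.
Qed.

End Metric.

Lemma first_countable_frechet_urysohn (T : Type) (op : set (set T)) :
  setI_closed op -> first_countable op -> frechet_urysohn op.
Proof.
move=> opI fc A z Az; have [B [Bz Bbase]] := fc z.
pose fix C n := if n is m.+1 then C m `&` B n else B 0%nat.
have Cz n : op (C n) /\ C n z.
  by elim: n => [|n [Co Cz]] /=; [exact: Bz|split; [apply: opI|]; case: (Bz n.+1)].
have CB m n : (m <= n)%nat -> C n `<=` B m.
  elim: n => [|n IH]; first by rewrite leqn0 => /eqP ->.
  by rewrite leq_eqVlt => /orP [/eqP -> x [] //|/IH CnB x [] /CnB].
have [u uAC] := choice (fun n => Az (C n) (proj1 (Cz n)) (proj2 (Cz n))).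
exists u; split=> [n|U oU Uz]; first by case: (uAC n).
by have [m BU] := Bbase U oU Uz; exists m => n mn; apply/BU/(CB m n mn); case: (uAC n).
Qed.

Section PointwiseTopology.
Variables (X Y : Type) (oX : set (set X)) (oY : set (set Y)).

Lemma Qp_open_setI : oY setT -> setI_closed oY -> setI_closed (Qp_open oX oY).
Proof.
move=> oYT oYI A B oA oB f [Af Bf].
have [F [V [FV VA]]] := oA f Af; have [G [W [GW WB]]] := oB f Bf.
pose side H (Z : X -> set Y) x := if pselect (List.In x H) then Z x else setT.
have sideP H Z : (forall x, List.In x H -> oY (Z x) /\ Z x (proj1_sig f x)) ->
    forall x, oY (side H Z x) /\ side H Z x (proj1_sig f x).
  by move=> HZ x; rewrite /side; destruct (pselect (List.In x H)); [exact: HZ|].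
exists (F ++ G), (fun x => side F V x `&` side G W x); split.
  move=> x _; have [oV' V'f] := sideP _ _ FV x; have [oW' W'f] := sideP _ _ GW x.
  by split; [exact: oYI|].
move=> g gVW; split; [apply: VA => x Fx | apply: WB => x Gx].
- have [+ _] := gVW x (List.in_or_app _ _ _ (or_introl Fx)).
  by rewrite /side; destruct (pselect (List.In x F)).
- have [_ +] := gVW x (List.in_or_app _ _ _ (or_intror Gx)).
  by rewrite /side; destruct (pselect (List.In x G)).
Qed.

Lemma Qp_open_eval (x : X) (V : set Y) :
  oY V -> Qp_open oX oY (fun f => V (proj1_sig f x)).
Proof.
move=> oV f Vfx; exists [:: x], (fun=> V); split; first by move=> x' [<-|[]].
by move=> g; apply; left.
Qed.

Lemma const_quasicontinuous (y : Y) : quasicontinuous oX oY (fun=> y).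
Proof.
move=> x V U _ Vy oU Ux; exists U; split=> //; split; first by exists x.
by split=> // _ [w _ <-].
Qed.

End PointwiseTopology.

Definition dclosure_indicator {X Y : Type} (d : X -> X -> R) (U : set X)
    (y0 y1 : Y) (x : X) : Y :=
  if pselect (dclosure d U x) then y1 else y0.

Section EscapingFamily.
Variables (X : Type) (oX : set (set X)) (d : X -> X -> R).
Hypothesis dm : metric_for oX d.

Lemma dclosure_indicator_quasicontinuous (Y : Type) (oY : set (set Y))
    (U : set X) (y0 y1 : Y) :
  oX U -> quasicontinuous oX oY (dclosure_indicator d U y0 y1).
Proof.
move=> oU x V O _ Vfx /(metric_openP dm) Ox /Ox [e e0 eO].
rewrite /dclosure_indicator in Vfx *.
case: pselect Vfx => [clx|nclx] Vfx.
- have [z Uz xz] := clx e e0.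
  have [r r0 rU] := (metric_openP dm U).1 oU z Uz.
  pose s := Rmin r (e - d x z).
  have s_r : s <= r := Rmin_l _ _; have s_e : s <= e - d x z := Rmin_r _ _.
  exists (dball d z s); split; first exact: (open_dball dm).
  split; first by exists z; apply: (dball_center dm); apply: Rmin_pos; lra.
  split=> [w zw|_ [w zw <-]].
    by apply: eO; have := metric_for_triangle dm x z w; rewrite /dball /= in zw *; lra.
  have clw : dclosure d U w.
    move=> e' e'0; exists w; last by rewrite (metric_for_xx dm).
    by apply: rU; rewrite /dball /= in zw *; lra.
  by case: pselect => [//|nclw]; case: (nclw clw).
- have [e' e'0 far] := notin_dclosure nclx.
  pose s := Rmin e (e' / 2).
  have s_e : s <= e := Rmin_l _ _; have s_e' : s <= e' / 2 := Rmin_r _ _.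
  exists (dball d x s); split; first exact: (open_dball dm).
  split; first by exists x; apply: (dball_center dm); apply: Rmin_pos; lra.
  split=> [w xw|_ [w xw <-]]; first by apply: eO; rewrite /dball /= in xw *; lra.
  case: pselect => // clw; have [a Ua wa] := clw (e' / 2) ltac:(lra).
  have := far a Ua; have := metric_for_triangle dm x w a; rewrite /dball /= in xw; lra.
Qed.

Definition escaping (U : seq X -> set X) : Prop :=
  [/\ forall G, oX (U G),
      forall G x, List.In x G -> dclosure d (U G) x &
      forall Gs : nat -> seq X, exists x,
        forall N, exists2 n, (N <= n)%nat & ~ dclosure d (U (Gs n)) x].

Lemma escaping_not_frechet_urysohn (Y : Type) (oY : set (set Y))
    {y0 y1 : Y} {V : set Y} (U : seq X -> set X) :
  oY V -> V y1 -> ~ V y0 -> escaping U ->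
  ~ frechet_urysohn (Qp_open oX oY).
Proof.
move=> oV Vy1 nVy0 [oU GU escape] fu.
pose ind G : Qp oX oY := exist _ (dclosure_indicator d (U G) y0 y1)
  (dclosure_indicator_quasicontinuous oY y0 y1 (oU G)).
pose one : Qp oX oY := exist _ _ (const_quasicontinuous oX oY y1).
have one_cl : in_closure (Qp_open oX oY) (range ind) one.
  move=> W oW Wone; have [F [V' [FV' V'W]]] := oW one Wone.
  exists (ind F); split; first by exists F.
  apply: V'W => x Fx; rewrite /= /dclosure_indicator.
  destruct (pselect (dclosure d (U F) x)) as [clx|nclx]; first by case: (FV' x Fx).
  by case: nclx; exact: GU.
have [u [u_ind u_one]] := fu _ _ one_cl.
have /choice [Gs Gs_u] : forall n, exists G, ind G = u n.
  by move=> n; have [G _ <-] := u_ind n; exists G.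
have [x xesc] := escape Gs.
have [N NV] := u_one _ (@Qp_open_eval _ _ oX oY x V oV) Vy1.
have [n Nn nclx] := xesc N; apply: nVy0.
have := NV n Nn; rewrite -Gs_u /= /dclosure_indicator.
by destruct (pselect (dclosure d (U (Gs n)) x)).
Qed.

End EscapingFamily.

Lemma Rmin_subadditive a x y z : 0 <= a -> 0 <= x -> 0 <= y -> z <= x + y ->
  Rmin a z <= Rmin a x + Rmin a y.
Proof. by rewrite /Rmin; do 3 case: Rle_dec; lra. Qed.

Section SupMetric.
Variables (X Y : Type) (oY : set (set Y)) (dY : Y -> Y -> R).
Hypothesis dYm : metric_for oY dY.
Variable e : nat -> X.
Hypothesis e_surj : forall x, exists n, e n = x.

Definition sup_term (n : nat) (f g : X -> Y) : R :=
  Rmin (/ (INR n + 1)) (dY (f (e n)) (g (e n))).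

Lemma sup_term_ge0 n f g : 0 <= sup_term n f g.
Proof.
apply: Rmin_glb; last exact: (metric_for_ge0 dYm).
by have := inv_succ_pos n; lra.
Qed.

Lemma sup_term_bounded f g : bound [set r | exists n, r = sup_term n f g].
Proof.
exists 1 => _ [n ->]; apply: Rle_trans (Rmin_l _ _) _.
by rewrite -Rinv_1; apply: Rinv_le_contravar; [lra|have := pos_INR n; lra].
Qed.

Definition sup_dist (f g : X -> Y) : R :=
  proj1_sig (completeness _ (sup_term_bounded f g) (ex_intro _ _ (ex_intro _ 0%nat erefl))).

Lemma sup_term_le n f g : sup_term n f g <= sup_dist f g.
Proof. by rewrite /sup_dist; case: completeness => m [ub _] /=; apply: ub; exists n. Qed.

Lemma sup_dist_le f g r : (forall n, sup_term n f g <= r) -> sup_dist f g <= r.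
Proof.
by move=> le; rewrite /sup_dist; case: completeness => m [_ lub] /=; apply: lub => _ [n ->].
Qed.

Lemma sup_dist_eq0 f g : sup_dist f g = 0 -> f = g.
Proof.
move=> fg0; apply: funext => x; have [n <-] := e_surj x.
apply: (metric_for_eq0 dYm); apply: Rle_antisym; last exact: (metric_for_ge0 dYm).
have := sup_term_le n f g; rewrite fg0 /sup_term /Rmin.
by have := inv_succ_pos n; case: Rle_dec; lra.
Qed.

Lemma sup_dist_xx f : sup_dist f f = 0.
Proof.
apply: Rle_antisym; last exact: Rle_trans (sup_term_ge0 0 f f) (sup_term_le 0 f f).
by apply: sup_dist_le => n; rewrite /sup_term (metric_for_xx dYm); exact: Rmin_r.
Qed.

Lemma sup_dist_sym f g : sup_dist f g = sup_dist g f.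
Proof.
suff le f' g' : sup_dist f' g' <= sup_dist g' f' by apply: Rle_antisym.
by apply: sup_dist_le => n; rewrite /sup_term (metric_for_sym dYm); exact: sup_term_le.
Qed.

Lemma sup_dist_triangle f g h : sup_dist f h <= sup_dist f g + sup_dist g h.
Proof.
apply: sup_dist_le => n; apply: Rle_trans (Rplus_le_compat _ _ _ _
  (sup_term_le n f g) (sup_term_le n g h)).
apply: Rmin_subadditive; try exact: (metric_for_ge0 dYm); last exact: (metric_for_triangle dYm).
by have := inv_succ_pos n; lra.
Qed.

Variable oX : set (set X).

Definition Qp_sup_dist (f g : Qp oX oY) : R := sup_dist (proj1_sig f) (proj1_sig g).

Lemma Qp_open_sup_open (U : set (Qp oX oY)) : Qp_open oX oY U ->
  forall f, U f -> exists2 r, 0 < r & dball Qp_sup_dist f r `<=` U.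
Proof.
move=> oU f Uf; have [F [V [FV VU]]] := oU f Uf.
have /choice [ei eiK] := e_surj.
have /choice [eps epsP] : forall x, exists eps, List.In x F ->
    0 < eps /\ dball dY (proj1_sig f x) eps `<=` V x.
  move=> x; case: (pselect (List.In x F)) => [xF|nxF]; last by exists 1.
  have [oVx Vfx] := FV x xF; have [eps eps0 epsV] := (metric_openP dYm _).1 oVx _ Vfx.
  by exists eps.
have [r r0 rF] : exists2 r, 0 < r &
    forall x, List.In x F -> r <= Rmin (/ (INR (ei x) + 1)) (eps x).
  apply: seq_pos_lower_bound => x xF; apply: Rmin_pos; first exact: inv_succ_pos.
  by case: (epsP x xF).
exists r => // g; rewrite /dball /Qp_sup_dist /= => fg; apply: VU => x xF.
have [_ epsV] := epsP x xF; apply: epsV; rewrite /dball /=.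
apply: Rnot_le_lt => le; have := sup_term_le (ei x) (proj1_sig f) (proj1_sig g).
rewrite /sup_term eiK; have := Rle_min_compat_l _ _ (/ (INR (ei x) + 1)) le.
have := rF x xF; lra.
Qed.

Lemma sup_open_Qp_open (U : set (Qp oX oY)) :
  (forall f, U f -> exists2 r, 0 < r & dball Qp_sup_dist f r `<=` U) ->
  Qp_open oX oY U.
Proof.
move=> Uopen f /Uopen [r r0 rU]; have [N Nr] := inv_succ_lt (ltac:(lra) : 0 < r / 2).
exists (List.map e (List.seq 0 N.+1)), (fun x => dball dY (proj1_sig f x) (r / 2)).
split=> [x _|g gV]; first by split; [exact: (open_dball dYm)|apply: (dball_center dYm); lra].
apply: rU; rewrite /dball /Qp_sup_dist /=.
suff : sup_dist (proj1_sig f) (proj1_sig g) <= r / 2 by lra.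
apply: sup_dist_le => n; case: (leqP n N) => [nN|Nn].
- apply: Rle_trans (Rmin_r _ _) _; apply: Rlt_le; apply: gV.
  by apply: List.in_map; apply/List.in_seq; lia.
- apply: Rle_trans (Rmin_l _ _) _; have := inv_succ_le (ltnW Nn); lra.
Qed.

Lemma Qp_sup_metric : metric_for (Qp_open oX oY) Qp_sup_dist.
Proof.
split; first by move=> f g; exact: Rle_trans (sup_term_ge0 0 _ _) (sup_term_le 0 _ _).
split.
  move=> f g; split=> [/sup_dist_eq0|<-]; last exact: sup_dist_xx.
  by case: f g => [f qf] [g qg] /= fg; apply: eq_exist.
split; first by move=> f g; exact: sup_dist_sym.
split; first by move=> f g h; exact: sup_dist_triangle.
move=> U; split=> [/Qp_open_sup_open oU f /oU [r r0 rU]|Uopen].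
  by exists r; split=> // g fg; apply: rU.
apply: sup_open_Qp_open => f /Uopen [r [r0 rU]]; by exists r.
Qed.

End SupMetric.

Lemma countable_Qp_metrizable {X Y : Type} (oX : set (set X)) {oY : set (set Y)}
    {dY : Y -> Y -> R} (x0 : X) :
  metric_for oY dY -> countable [set: X] -> metrizable_top (Qp_open oX oY).
Proof.
move=> dYm /(countable_enum x0) [e eX]; exists (@Qp_sup_dist X Y oY dY e oX).
by apply: Qp_sup_metric => // x; have [n _ <-] := eX x I; exists n.
Qed.

Lemma discrete_bool_metric :
  metric_for (discrete_top bool) (fun a b => if a == b then 0 else 1).
Proof.
split; first by move=> [] [] /=; lra.
split; first by move=> [] [] /=; split=> //; lra.
split; first by move=> [] [].
split; first by move=> [] [] [] /=; lra.
move=> U; split=> // _ x Ux; exists 1; split; first lra.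
by move=> y; case: eqP => [<- //|_ ?]; lra.
Qed.

Section ThinSets.
Variables (X : Type) (op : set (set X)) (d : X -> X -> R).
Hypothesis dm : metric_for op d.

Lemma not_dclosure_shrinking_balls (G : seq X) (y : X -> nat -> X)
    (r e : X -> nat -> R) (q : X) :
  ~ List.In q G ->
  (forall x n, List.In x G ->
     [/\ d x (y x n) < / (INR n + 1), r x n <= / (INR n + 1), 0 < e x n &
         forall z, d (y x n) z < r x n -> e x n <= d q z]) ->
  ~ dclosure d [set z | exists x n, List.In x G /\ d (y x n) z < r x n] q.
Proof.
move=> qG balls.
have [del del0 delG] : exists2 del, 0 < del & forall x, List.In x G -> del <= d x q.
  by apply: seq_pos_lower_bound => x xG; apply: (metric_for_gt0 dm) => xq; apply: qG; rewrite -xq.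
have [N N_del] := inv_succ_lt (ltac:(lra) : 0 < del / 4).
have [eps eps0 epsG] : exists2 eps, 0 < eps &
    forall p, List.In p (List.list_prod G (List.seq 0 N)) -> eps <= e p.1 p.2.
  by apply: seq_pos_lower_bound => -[x n] /List.in_prod_iff [xG _]; case: (balls x n xG).
have m0 : 0 < Rmin (del / 2) eps by apply: Rmin_pos; lra.
move=> /(_ _ m0) [z [x [n [xG yz]]] qz].
have m1 := Rmin_l (del / 2) eps; have m2 := Rmin_r (del / 2) eps.
have [xy rn e0 far] := balls x n xG.
(* Balls of index n >= N lie within del / 2 of their x, hence far from q;
   the finitely many others are each at distance >= eps from q. *)
case: (leqP N n) => [Nn|nN].
- have := inv_succ_le Nn; have := delG x xG.
  have := metric_for_triangle dm x (y x n) q; have := metric_for_triangle dm (y x n) z q.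
  rewrite (metric_for_sym dm z q); lra.
- have eps_e : eps <= e x n.
    by apply: (epsG (x, n)); apply/List.in_prod_iff; split=> //; apply/List.in_seq; lia.
  have := far z yz; lra.
Qed.

Definition thin (P : set X) : Prop :=
  forall G x, List.In x G -> nowhere_dense_at d (P `\` [set q | List.In q G]) x.

Lemma thin_family P : thin P ->
  exists U : seq X -> set X,
    [/\ forall G, op (U G),
        forall G x, List.In x G -> dclosure d (U G) x &
        forall G q, P q -> ~ List.In q G -> ~ dclosure d (U G) q].
Proof.
move=> Pthin.
have /choice [c cP] : forall t : seq X * X * nat, exists p : X * R,
    List.In t.1.2 t.1.1 ->
    [/\ d t.1.2 p.1 < / (INR t.2 + 1), 0 < p.2 &
        forall q, P q -> ~ List.In q t.1.1 -> p.2 <= d p.1 q].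
  move=> [[G x] n] /=; case: (pselect (List.In x G)) => [xG|nxG]; last by exists (x, 1) => /nxG.
  have [y [s [s0 xy far]]] := Pthin G x xG _ (inv_succ_pos n).
  by exists (y, s) => _; split=> // q Pq qG; apply: far.
pose y G x n := (c (G, x, n)).1; pose s G x n := (c (G, x, n)).2.
pose r G x n := Rmin (s G x n / 2) (/ (INR n + 1)).
have r0 G x n : List.In x G -> 0 < r G x n.
  by case/(cP (G, x, n)) => _ s0 _; apply: Rmin_pos; [rewrite /s; lra|exact: inv_succ_pos].
exists (fun G => [set z | exists x n, List.In x G /\ d (y G x n) z < r G x n]).
split.
- move=> G; apply: (open_union_dballs dm) => z [x [n [xG yz]]].
  by exists (y G x n), (r G x n); split=> // w yw; exists x, n.
- move=> G x xG e e0; have [n ne] := inv_succ_lt e0.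
  have [/= xy _ _] := cP (G, x, n) xG.
  exists (y G x n); last by rewrite /y /=; lra.
  by exists x, n; split=> //; rewrite (metric_for_xx dm); exact: r0.
- move=> G q Pq qG.
  apply: (@not_dclosure_shrinking_balls G (y G) (r G) (fun x n => s G x n / 2)) => // x n xG.
  have [/= xy s0 far] := cP (G, x, n) xG.
  have rs := Rmin_l (s G x n / 2) (/ (INR n + 1)).
  split=> //; [exact: Rmin_r|rewrite /s; lra|move=> z yz].
  have := far q Pq qG; have := metric_for_triangle dm (y G x n) z q.
  rewrite (metric_for_sym dm z q) /r /y /s /= in yz rs *; lra.
Qed.

Lemma nowhere_dense_thin P : (forall x, nowhere_dense_at d P x) -> thin P.
Proof.
move=> Pnd G x _ e e0; have [y [s [s0 xy far]]] := Pnd x e e0.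
by exists y, s; split=> // a [Pa _]; exact: far.
Qed.

Definition separated_by (e : R) (S : set X) : Prop :=
  forall a b, S a -> S b -> a <> b -> e <= d a b.

Lemma separated_thin e S : 0 < e -> separated_by e S -> thin S.
Proof.
move=> e0 Ssep G x xG e' e'0; exists x.
suff [s s0 far] : exists2 s, 0 < s & forall a, S a -> ~ List.In a G -> s <= d x a.
  by exists s; split=> //; [rewrite (metric_for_xx dm)|move=> a [Sa aG]; exact: far].
case: (pselect (exists2 a, S a /\ ~ List.In a G & d x a < e / 2)) => [[a [Sa aG] xa]|none].
- have xa0 : 0 < d x a by apply: (metric_for_gt0 dm) => xa'; apply: aG; rewrite -xa'.
  exists (Rmin (e / 2) (d x a)); first by apply: Rmin_pos; lra.
  move=> b Sb bG; case: (pselect (a = b)) => [<-|ab]; first exact: Rmin_r.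
  have := Ssep a b Sa Sb ab; have := metric_for_triangle dm a x b.
  have := Rmin_l (e / 2) (d x a); rewrite (metric_for_sym dm a x); lra.
- exists (e / 2); first lra.
  by move=> b Sb bG; apply: Rnot_lt_le => xb; apply: none; exists b.
Qed.

Lemma thin_escaping P : ~ countable P -> thin P -> exists U, escaping op d U.
Proof.
move=> Punc /thin_family [U [oU GU far]]; exists U; split=> // Gs.
have [q Pq qG] := uncountable_avoid_lists Punc Gs.
by exists q => N; exists N => //; exact: far.
Qed.

End ThinSets.

Section Separability.
Variables (X : Type) (op : set (set X)) (d : X -> X -> R).
Hypothesis dm : metric_for op d.

Lemma maximal_separated e : 0 < e ->
  exists S, separated_by d e S /\ forall x, exists2 s, S s & d x s < e.
Proof.
move=> e0.
have chain_sep F : F `<=` separated_by d e -> total_on F subset ->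
    separated_by d e (\bigcup_(A in F) A).
  move=> Fsep Ftot a b [A FA Aa] [B FB Bb] ab.
  case: (Ftot A B FA FB) => [AB|BA].
  - by apply: (Fsep B FB) => //; exact: AB.
  - by apply: (Fsep A FA) => //; exact: BA.
have [S [Ssep Smax]] := Zorn_bigcup chain_sep.
exists S; split=> // x; apply: contrapT => far.
have {}far s : S s -> e <= d x s.
  by move=> Ss; apply: Rnot_lt_le => xs; apply: far; exists s.
have nSx : ~ S x by move=> Sx; have := far x Sx; rewrite (metric_for_xx dm); lra.
apply: (Smax (S `|` [set x])).
  by split=> [y Sy|/(_ x (or_intror erefl))]; [left|].
move=> a b [Sa|->] [Sb|->] ab.
- exact: Ssep.
- by rewrite (metric_for_sym dm); exact: far.
- exact: far.
- by case: ab.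
Qed.

Lemma separable_of_separated_countable (x0 : X) :
  (forall e S, 0 < e -> separated_by d e S -> countable S) ->
  exists dd : nat -> X, forall x e, 0 < e -> exists k, d x (dd k) < e.
Proof.
move=> sep_countable.
have /choice [S SP] := fun n => maximal_separated (inv_succ_pos n).
have [dd Sdd] := countable_enum x0 (bigcup_countable (F := S) (countableP setT)
  (fun n _ => sep_countable _ _ (inv_succ_pos n) (proj1 (SP n)))).
exists dd => x e e0; have [n ne] := inv_succ_lt e0.
have [s Ss xs] := (proj2 (SP n)) x.
have [k _ ks] := Sdd s (ex_intro2 _ _ n I Ss).
by exists k; rewrite ks; lra.
Qed.

End Separability.

Section SeparableCase.
Variables (X : Type) (op : set (set X)) (d : X -> X -> R).
Hypothesis dm : metric_for op d.
Hypothesis Xunc : ~ countable [set: X].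
Hypothesis nowhere_dense_countable :
  forall P, (forall x, nowhere_dense_at d P x) -> countable P.
Variable dd : nat -> X.
Hypothesis dd_dense : forall x e, 0 < e -> exists k, d x (dd k) < e.

Definition spread (T : seq X) (rho : R) : Prop :=
  [/\ List.NoDup T, 0 < rho &
      forall a b, List.In a T -> List.In b T -> a <> b -> 4 * rho <= d a b].

Lemma uncountable_spread n : exists p : seq X * R, size p.1 = n /\ spread p.1 p.2.
Proof.
have [T [uT sT]] := uncountable_NoDup n Xunc.
have [r r0 rT] : exists2 r, 0 < r & forall p, List.In p (List.list_prod T T) ->
    r <= if pselect (p.1 = p.2) then 1 else d p.1 p.2.
  by apply: seq_pos_lower_bound => p _; case: pselect => [e|ne] /=; [lra|exact: (metric_for_gt0 dm)].
exists (T, r / 4); split=> //=; split=> //; first lra.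
move=> a b aT bT ab; have := rT (a, b) (List.in_prod _ _ _ _ aT bT).
by case: pselect => [/ab|ne] //= rab; lra.
Qed.

Lemma spread_not_covered {T : seq X} {rho : R} {G : seq X} {r : R} :
  spread T rho -> (size G < size T)%nat -> 0 < r -> r <= rho ->
  exists2 t, List.In t T & ~ dclosure d (dballs d G r) t.
Proof.
move=> [uT rho0 Tsep] GT r0 r_rho; apply: contrapT => covered.
have /choice [g gP] : forall t, exists g, List.In t T -> List.In g G /\ d t g < 2 * r.
  move=> t; case: (pselect (List.In t T)) => [tT|ntT]; last by exists t.
  have [g gG tg] : exists2 g, List.In g G & d t g < 2 * r.
    apply: (dclosure_dballs dm) => //; apply: contrapT => nclt; apply: covered; by exists t.
  by exists g.
have [a [b [aT bT ab gab]]] := pigeonhole_In uT GT (fun t tT => proj1 (gP t tT)).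
have := Tsep a b aT bT ab; have := metric_for_triangle dm a (g a) b.
have := proj2 (gP a aT); have := proj2 (gP b bT).
rewrite gab (metric_for_sym dm (g b) b); lra.
Qed.

Definition basic_ball (k m : nat) : set X := dball d (dd k) (/ (INR m + 1)).

Lemma basic_ball_sub x e (E : set X) : 0 < e -> dball d x e `<=` E ->
  exists k m, basic_ball k m x /\ basic_ball k m `<=` E.
Proof.
move=> e0 xE; have [m me] := inv_succ_lt (ltac:(lra) : 0 < e / 2).
have [k xk] := dd_dense x (inv_succ_pos m).
exists k, m; split; first by rewrite /basic_ball /dball /= (metric_for_sym dm); lra.
move=> w; rewrite /basic_ball /dball /= => kw; apply: xE; rewrite /dball /=.
have := metric_for_triangle dm x (dd k) w; lra.
Qed.

Lemma uncountable_basic_ball (E : nat -> set X) :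
  (forall x, exists N, E N x) -> (forall N x, dclosure d (E N) x -> E N x) ->
  exists N k m, ~ countable (basic_ball k m) /\ basic_ball k m `<=` E N.
Proof.
move=> Ecover Eclosed; apply: contrapT => small; apply: Xunc.
have countable_E N : countable (E N).
  pose good := [set p : nat * nat | basic_ball p.1 p.2 `<=` E N].
  apply: (@sub_countable _ _ _ ((\bigcup_(p in good) basic_ball p.1 p.2)
                                `|` (E N `\` dinterior d (E N)))).
    apply: subset_card_le => x ENx.
    case: (pselect (dinterior d (E N) x)) => [[e e0 xE]|nint]; last by right.
    by left; have [k [m [kx kE]]] := basic_ball_sub e0 xE; exists (k, m).
  apply: countable_setU.
    apply: bigcup_countable => [|p pE]; first exact: countableP.
    by apply: contrapT => pU; apply: small; exists N, p.1, p.2.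
  exact/nowhere_dense_countable/(closed_boundary_nowhere_dense dm)/Eclosed.
apply: (@sub_countable _ _ _ (\bigcup_(N in setT) E N)).
  by apply: subset_card_le => x _; have [N ENx] := Ecover x; exists N.
by apply: bigcup_countable => // N _; exact: countable_E.
Qed.

Definition spares_basic_balls (G : seq X) (r : R) : Prop :=
  forall k m, (k < size G)%nat -> (m < size G)%nat ->
    (exists2 b, basic_ball k m b & ~ List.In b G) ->
    exists2 b, basic_ball k m b & ~ dclosure d (dballs d G r) b.

Lemma basic_ball_radius rho G : 0 < rho ->
  exists r, [/\ 0 < r, r <= rho & spares_basic_balls G r].
Proof.
move=> rho0; have [b0 _ b0G] := uncountable_avoid_lists Xunc (fun=> G).
have /choice [w wP] : forall p : nat * nat, exists b, ~ List.In b G /\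
    ((exists2 b', basic_ball p.1 p.2 b' & ~ List.In b' G) -> basic_ball p.1 p.2 b).
  move=> p; case: (pselect (exists2 b', basic_ball p.1 p.2 b' & ~ List.In b' G)).
    by move=> [b pb bG]; exists b.
  by move=> none; exists b0; split=> [|ex]; [exact: b0G 0%nat|case: (none ex)].
pose idx := List.seq 0 (size G).
have [r r0 rP] : exists2 r, 0 < r & forall q,
    List.In q (List.list_prod (List.list_prod idx idx) G) -> r <= d (w q.1) q.2.
  apply: seq_pos_lower_bound => -[p g] /List.in_prod_iff [_ gG] /=.
  by apply: (metric_for_gt0 dm) => wg; case: (wP p) => + _; apply; rewrite wg.
exists (Rmin rho (r / 2)); split; [by apply: Rmin_pos; lra|exact: Rmin_l|].
move=> k m kG mG ex; exists (w (k, m)); first by case: (wP (k, m)) => _; apply.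
have r2 : 0 < Rmin rho (r / 2) by apply: Rmin_pos; lra.
move=> /(dclosure_dballs dm r2) [g gG wg].
have wr : r <= d (w (k, m)) g.
  apply: (rP ((k, m), g)); apply/List.in_prod_iff; split=> //.
  by apply/List.in_prod_iff; split; apply/List.in_seq; lia.
have := Rmin_r rho (r / 2); lra.
Qed.

Lemma spares_basic_balls_size G r k m :
  spares_basic_balls G r -> ~ countable (basic_ball k m) ->
  basic_ball k m `<=` dclosure d (dballs d G r) -> (size G <= maxn k m)%nat.
Proof.
move=> spare Bunc Bcl; rewrite leqNgt; apply/negP => big.
have [b0 Bb0 b0G] := uncountable_avoid_lists Bunc (fun=> G).
have [b Bb nclb] := spare k m ltac:(lia) ltac:(lia) (ex_intro2 _ _ b0 Bb0 (b0G 0%nat)).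
exact: nclb (Bcl b Bb).
Qed.

Lemma separable_escaping : exists U, escaping op d U.
Proof.
have /choice [T TP] := fun n => uncountable_spread n.+1.
have rho0 s : 0 < (T s).2 by case: (TP s) => _ [].
have /choice [rad radP] := fun G => basic_ball_radius G (rho0 (size G)).
have rad0 G : 0 < rad G by case: (radP G).
exists (fun G => dballs d G (rad G)); split.
- by move=> G; exact: (open_dballs dm).
- move=> G g gG e e0; exists g; last by rewrite (metric_for_xx dm).
  by exists g => //; rewrite (metric_for_xx dm); exact: rad0.
move=> Gs; apply: contrapT => noesc.
have ev x : exists N, forall n, (N <= n)%nat -> dclosure d (dballs d (Gs n) (rad (Gs n))) x.
  apply: contrapT => nev; apply: noesc; exists x => N; apply: contrapT => nex.
  apply: nev; exists N => n Nn; apply: contrapT => ncl; apply: nex; by exists n.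
pose E N := [set x | forall n, (N <= n)%nat -> dclosure d (dballs d (Gs n) (rad (Gs n))) x].
have [N [k [m [Bunc BE]]]] : exists N k m, ~ countable (basic_ball k m) /\ basic_ball k m `<=` E N.
  apply: uncountable_basic_ball => [x|N' x clx n N'n]; first exact: ev.
  by apply/(dclosure_idem dm)/(dclosureS _ clx) => y; apply.
have small n : (N <= n)%nat -> (size (Gs n) <= maxn k m)%nat.
  move=> Nn; have [_ _ spare] := radP (Gs n).
  by apply: spares_basic_balls_size spare Bunc _ => b /BE; apply.
have [N' N'T] : exists N', forall n, (N' <= n)%nat ->
    forall s, List.In s (List.seq 0 (maxn k m).+1) ->
    forall t, List.In t (T s).1 -> dclosure d (dballs d (Gs n) (rad (Gs n))) t.
  by apply: seq_eventually => s _; apply: seq_eventually => t _; exact: ev.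
pose n := (N + N')%nat; have [sizeT spreadT] := TP (size (Gs n)).
have [rad0' rad_rho _] := radP (Gs n).
have [t tT nclt] := spread_not_covered spreadT
  (ltac:(rewrite sizeT; lia) : (size (Gs n) < size (T (size (Gs n))).1)%nat) rad0' rad_rho.
apply: nclt; apply: (N'T n (leq_addl _ _) (size (Gs n))) => //.
by apply/List.in_seq; have := small n (leq_addr _ _); lia.
Qed.

End SeparableCase.

Lemma uncountable_escaping (X : Type) (op : set (set X)) (d : X -> X -> R) :
  metric_for op d -> ~ countable [set: X] -> exists U, escaping op d U.
Proof.
move=> dm Xunc; have [x0 _ _] := uncountable_avoid_lists Xunc (fun=> [::]).
case: (pselect (exists2 P, ~ countable P & thin d P)) => [[P Punc Pthin]|nothin].
  exact: (thin_escaping dm Punc Pthin).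
have thin_countable P : thin d P -> countable P.
  by move=> Pthin; apply: contrapT => Punc; apply: nothin; exists P.
have [dd dd_dense] := separable_of_separated_countable dm x0
  (fun e S e0 Ssep => thin_countable S (separated_thin dm e0 Ssep)).
have nowhere_dense_countable P : (forall x, nowhere_dense_at d P x) -> countable P.
  by move=> Pnd; exact/thin_countable/nowhere_dense_thin.
exact: (separable_escaping dm Xunc nowhere_dense_countable dd dd_dense).
Qed.

Theorem corollary7p2 (X Y : topologicalType) :
  metrizable_top (@open X) -> metrizable_top (@open Y) ->
  nontrivial X -> nontrivial Y ->
  [/\ (countable [set: X] <->
         frechet_urysohn (Qp_open (@open X) (discrete_top bool))),
      (countable [set: X] <-> frechet_urysohn (Qp_open (@open X) (@open Y))),
      (countable [set: X] <-> first_countable (Qp_open (@open X) (@open Y))) &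
      (countable [set: X] <-> metrizable_top (Qp_open (@open X) (@open Y)))].
Proof.
move=> [dX dXm] [dY dYm] [x0 _] [y0 [y1 y01]].
have metrizable_fu (Z : Type) (oZ : set (set Z)) : oZ setT -> setI_closed oZ ->
    metrizable_top (Qp_open (@open X) oZ) -> frechet_urysohn (Qp_open (@open X) oZ).
  move=> oZT oZI [d dm]; apply: first_countable_frechet_urysohn.
    exact: Qp_open_setI.
  exact: metric_first_countable dm.
have fu_countable (Z : Type) (oZ : set (set Z)) V z0 z1 : oZ V -> V z1 -> ~ V z0 ->
    frechet_urysohn (Qp_open (@open X) oZ) -> countable [set: X].
  move=> oV Vz1 nVz0 fu; apply: contrapT => /(uncountable_escaping dXm) [U Uesc].
  exact: (escaping_not_frechet_urysohn dXm oV Vz1 nVz0 Uesc fu).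
have [V [oV Vy1 nVy0]] := metric_separating dYm y01.
have QpY_metrizable := countable_Qp_metrizable (@open X) x0 dYm.
have QpY_fu := metrizable_fu _ _ openT (@openI Y).
split; split.
- move/(countable_Qp_metrizable (@open X) x0 discrete_bool_metric).
  exact: metrizable_fu.
- exact: (fu_countable _ _ [set true] false true).
- by move/QpY_metrizable/QpY_fu.
- exact: fu_countable oV Vy1 nVy0.
- by move/QpY_metrizable => [d dm]; exact: metric_first_countable dm.
- move=> fc; apply: (fu_countable _ _ _ _ _ oV Vy1 nVy0).
  exact: first_countable_frechet_urysohn (Qp_open_setI openT (@openI Y)) fc.
- exact: QpY_metrizable.
- by move/QpY_fu; exact: fu_countable oV Vy1 nVy0.
Qed.
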